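(* Let $\mathcal{J}$ be a finite set of content points and fix a provider $k$ with skill beliefs $\widetilde{S}_k=(\widetilde{s}_{k,j})_{j\in\mathcal{J}}$, $\widetilde{s}_{k,j}\in(0,1]$, and audience beliefs $\widetilde{A}_k=(\widetilde{a}_{k,j})_{j\in\mathcal{J}}$, $\widetilde{a}_{k,j}\ge 0$. For $j\in\mathcal{J}$ and trust $\lambda\in(0,1]$ define $$\phi(j;\lambda,\widetilde{S}_k,\widetilde{A}_k)=\max\left\{\frac{1}{\lambda}\left(\frac{\widetilde{s}_{k,\ell}\,\widetilde{a}_{k,\ell}}{\widetilde{s}_{k,j}}-(1-\lambda)\widetilde{a}_{k,j}\right):\ \ell\in\mathcal{J},\ \widetilde{s}_{k,\ell}\widetilde{a}_{k,\ell}>\widetilde{s}_{k,j}\widetilde{a}_{k,j}\right\}.$$ Then for every $j\in\mathcal{J}$ and all trust values $\lambda\ge\lambda'$ in $(0,1]$, $\phi(j;\lambda,\widetilde{S}_k,\widetilde{A}_k)\le\phi(j;\lambda',\widetilde{S}_k,\widetilde{A}_k)$.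
   Context: Interpretation: $\phi(j;\lambda,\widetilde{S}_k,\widetilde{A}_k)$ is the minimum promised audience a recommender system must commit to provider $k$ so that, when $k$ updates its audience belief at $j$ to $(1-\lambda)\widetilde{a}_{k,j}+\lambda C$ upon receiving a promise $C$ and chooses the point maximizing $\widetilde{s}_{k,\cdot}\widetilde{a}_{k,\cdot}$, point $j$ becomes $k$'s best response. *)

From mathcomp Require Import all_boot all_order all_algebra.
Set Implicit Arguments. Unset Strict Implicit. Unset Printing Implicit Defensive.
Import Order.TTheory GRing.Theory Num.Theory.
Local Open Scope ring_scope.

Definition phi_term (R : realFieldType) (J : finType) (lam : R)
  (s a : J -> R) (j l : J) : R :=
  lam^-1 * (s l * a l / s j - (1 - lam) * a j).

(* phi(j; lam, S, A) = max over l with s_l a_l > s_j a_j of phi_term.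
   Convention for the empty index set: 0. *)
Definition phi (R : realFieldType) (J : finType) (j : J) (lam : R)
  (s a : J -> R) : R :=
  \big[Num.max/0]_(l : J | s j * a j < s l * a l) phi_term lam s a j l.

(* Each candidate term equals a_j + (s_l a_l / s_j - a_j) / lam, and the
   numerator is nonnegative exactly because l is a candidate; so every term
   decreases as the trust lam grows, and so does their maximum. *)
From mathcomp Require Import all_boot all_order all_algebra.
From mathcomp Require Import ring.
Import Order.TTheory GRing.Theory Num.Theory.
Local Open Scope ring_scope.

Lemma phi_termE (R : realFieldType) (J : finType) (lam : R) (s a : J -> R)
    (j l : J) :
  lam != 0 -> phi_term lam s a j l = lam^-1 * (s l * a l / s j - a j) + a j.
Proof.
move=> lam_neq0.
by rewrite -[in X in _ + X](mul1r (a j)) -(mulVf lam_neq0) /phi_term; ring.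
Qed.

Lemma le_phi_term (R : realFieldType) (J : finType) (s a : J -> R)
    (j l : J) (lam lam' : R) :
  0 < s j -> s j * a j <= s l * a l -> 0 < lam' -> lam' <= lam ->
  phi_term lam s a j l <= phi_term lam' s a j l.
Proof.
move=> sj_gt0 le_jl lam'_gt0 le_lam.
have lam_gt0 : 0 < lam by apply: lt_le_trans le_lam.
rewrite !phi_termE ?gt_eqF // lerD2r.
apply: ler_wpM2r; last by rewrite lef_pV2 ?posrE.
by rewrite subr_ge0 ler_pdivlMr // mulrC.
Qed.

Theorem lemma1 (R : realFieldType) (J : finType) (s a : J -> R)
  (hs : forall j, 0 < s j /\ s j <= 1)
  (ha : forall j, 0 <= a j)
  (j : J) (lam lam' : R)
  (hlam : 0 < lam /\ lam <= 1) (hlam' : 0 < lam' /\ lam' <= 1)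
  (hle : lam' <= lam) :
  phi j lam s a <= phi j lam' s a.
Proof.
apply: le_bigmax2 => l /ltW le_jl.
by apply: le_phi_term => //; [case: (hs j) | case: hlam'].
Qed.
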